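(* Let $p$ be a prime and $N$ an integer with $p^2>N\ge1$. The linear complexity $L_p(N)$ of the sequence $q_p(u)$, $u=0,\ldots,N-1$ (viewed as elements of $\mathbb{F}_p$), satisfies $$L_p(N)\ge\frac12\min\{p-1,\,N-p-1\}.$$
   Context: For a prime $p$ and an integer $u$ with $\gcd(u,p)=1$, the Fermat quotient $q_p(u)$ is the unique integer with $q_p(u)\equiv (u^{p-1}-1)/p \pmod p$ and $0\le q_p(u)\le p-1$; also $q_p(kp)=0$ for all $k\in\mathbb{Z}$. The linear complexity of an $N$-element sequence $s_0,\ldots,s_{N-1}$ in a ring $\mathcal{R}$ is the smallest $L$ such that $s_{u+L}=c_{L-1}s_{u+L-1}+\cdots+c_0s_u$ for all $0\le u\le N-L-1$, for some $c_0,\ldots,c_{L-1}\in\mathcal{R}$. *)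

From mathcomp Require Import all_boot all_algebra.
From mathcomp Require Import boolp.
Set Implicit Arguments. Unset Strict Implicit. Unset Printing Implicit Defensive.
Import GRing.Theory.
Local Open Scope ring_scope.

(* Fermat quotient q_p(u) for u : nat, as an integer in [0, p-1]:
   0 if p | u, otherwise ((u^(p-1) - 1)/p) mod p (the division is exact
   by Fermat's little theorem when p is prime and p does not divide u). *)
Definition fermat_quotient (p u : nat) : nat :=
  if (p %| u)%N then 0%N else ((((u ^ (p - 1)).-1) %/ p) %% p)%N.

Definition has_lin_rec (R : pzRingType) (s : nat -> R) (N L : nat) : Prop :=
  exists c : 'I_L -> R, forall u : nat, (u + L < N)%N ->
    s (u + L)%N = \sum_(i < L) c i * s (u + i)%N.

Lemma has_lin_rec_N (R : pzRingType) (s : nat -> R) (N : nat) :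
  exists L, `[< has_lin_rec s N L >].
Proof.
exists N; apply/asboolP; exists (fun _ => 0) => u; rewrite ltnNge leq_addl //.
Qed.

Definition linear_complexity (R : pzRingType) (s : nat -> R) (N : nat) : nat :=
  ex_minn (has_lin_rec_N s N).

Definition Lp (p N : nat) : nat :=
  linear_complexity (fun u => ((fermat_quotient p u)%:R : 'F_p)) N.

From mathcomp Require Import all_boot all_order all_algebra finfield zify ring.
Set Implicit Arguments. Unset Strict Implicit. Unset Printing Implicit Defensive.
Import Order.TTheory GRing.Theory.
Local Open Scope ring_scope.

(* For 0 < u < p, (u + p)^(p-1) = u^(p-1) - p u^(p-2) mod p^2, hence
   q_p(u + p) - q_p(u) = -1/u in F_p.  A linear recurrence for q_p of length
   L on [0, N) thus yields one of the same length for 1/u on [1, M), with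
   M = min(p, N - p).  Clearing denominators, it becomes a nonzero polynomial
   of degree at most L (nonzero at -L) vanishing at 1, ..., M - L - 1, so
   M - L - 1 <= L. *)

Lemma expnD_mod_sq (u p n : nat) :
  exists K, ((u + p) ^ n.+1 = u ^ n.+1 + n.+1 * p * u ^ n + p ^ 2 * K)%N.
Proof.
elim: n => [|n [K IH]]; first by exists 0%N; rewrite expn1 expn0; ring.
exists (u * K + n.+1 * u ^ n + p * K)%N.
by rewrite expnS IH !(expnS u); ring.
Qed.

Lemma Fp_nat_neq0 p k : prime p -> (0 < k < p)%N -> (k%:R : 'F_p) != 0.
Proof.
move=> pr_p /andP[k_gt0 k_lt_p]; rewrite -(dvdn_pcharf (pchar_Fp pr_p)).
by apply/negP => /dvdn_leq; lia.
Qed.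

Lemma Fp_fermat_little p (x : 'F_p) : prime p -> x != 0 -> x ^+ (p - 1) = 1.
Proof.
move=> pr_p x_neq0; apply: (mulIf x_neq0); rewrite mul1r -exprSr.
by rewrite -[in RHS](expf_card x) card_Fp // subn1 prednK ?prime_gt0.
Qed.

Lemma fermat_quotient_shift p u : prime p -> (0 < u < p)%N ->
  ((fermat_quotient p (u + p))%:R : 'F_p) = (fermat_quotient p u)%:R - (u ^ (p - 2))%:R.
Proof.
move=> pr_p /andP[u_gt0 u_lt_p]; have p_gt1 := prime_gt1 pr_p.
have p_ndvd_u : ~~ (p %| u)%N by rewrite /dvdn modn_small //; lia.
have p_ndvd_up : ~~ (p %| u + p)%N by rewrite dvdn_addl.
rewrite /fermat_quotient (negbTE p_ndvd_u) (negbTE p_ndvd_up) !Fp_nat_mod //.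
have -> : (p - 1 = (p - 2).+1)%N by lia.
have [K ->] := expnD_mod_sq u p (p - 2).
have up_gt0 : (0 < u ^ (p - 2).+1)%N by rewrite expn_gt0 u_gt0.
have -> : ((u ^ (p - 2).+1 + (p - 2).+1 * p * u ^ (p - 2) + p ^ 2 * K).-1
          = (u ^ (p - 2).+1).-1 + p * ((p - 2).+1 * u ^ (p - 2) + p * K))%N by lia.
rewrite divnDr ?dvdn_mulr // mulKn ?prime_gt0 // !(natrD, natrM).
by rewrite -natr1 natrB ?pchar_Fp_0 //; ring.
Qed.

Lemma fermat_quotient_shift_sub p u : prime p -> (0 < u < p)%N ->
  ((fermat_quotient p (u + p))%:R - (fermat_quotient p u)%:R : 'F_p) = - (u%:R)^-1.
Proof.
move=> pr_p u_bd; have u_neq0 := Fp_nat_neq0 pr_p u_bd.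
apply: (mulfI u_neq0); rewrite fermat_quotient_shift // addrC addKr.
rewrite !mulrN divff // -natrM -expnS.
have -> : (p - 2).+1 = (p - 1)%N by have := prime_gt1 pr_p; lia.
by rewrite natrX Fp_fermat_little.
Qed.

Lemma lin_rec_sub_shift (R : pzRingType) (s : nat -> R) L (c : 'I_L -> R) N k :
  (forall u, (u + L < N)%N -> s (u + L)%N = \sum_(i < L) c i * s (u + i)%N) ->
  forall u, (u + L + k < N)%N ->
  s (u + L + k)%N - s (u + L)%N = \sum_(i < L) c i * (s (u + i + k)%N - s (u + i)%N).
Proof.
move=> rec u ulk_lt_N.
under eq_bigr do rewrite mulrBr.
rewrite sumrB rec ?(addnAC u L k) ?rec; [|lia|lia].
by congr (_ - _); apply: eq_bigr => i _; rewrite (addnAC u k i).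
Qed.

Lemma size_prod_XaddC (F : idomainType) n (P : pred 'I_n) (a : 'I_n -> F) :
  size (\prod_(j < n | P j) ('X + (a j)%:P)) = #|P|.+1.
Proof.
rewrite size_prod => [|j _]; last by rewrite -size_poly_eq0 size_XaddC.
under eq_bigr do rewrite size_XaddC.
by rewrite sum_nat_const -[2%R]/2%N muln2 -addnn -addSn addnK.
Qed.

Lemma prod_ord_neq (F : fieldType) L (x : nat -> F) (i : 'I_L.+1) :
  x i != 0 -> \prod_(j < L.+1 | j != i) x j = (\prod_(j < L.+1) x j) / x i.
Proof. by move=> xi_neq0; rewrite [in RHS](bigD1 i) //= mulrC mulKf. Qed.

Section InverseRecurrence.

Variables (F : fieldType) (L M : nat) (c : 'I_L -> F).
Hypothesis nat_neq0 : forall k, (0 < k < M)%N -> k%:R != 0 :> F.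
Hypothesis rec_inv : forall u, (0 < u)%N -> (u + L < M)%N ->
  ((u + L)%:R)^-1 = \sum_(i < L) c i * ((u + i)%:R)^-1.

Definition inv_rec_poly : {poly F} :=
  \prod_(j < L) ('X + j%:R%:P)
  - \sum_(i < L) c i *: \prod_(j < L.+1 | j != widen_ord (leqnSn L) i) ('X + j%:R%:P).

Lemma horner_inv_rec_poly x :
  inv_rec_poly.[x] = \prod_(j < L) (x + j%:R)
  - \sum_(i < L) c i * \prod_(j < L.+1 | j != widen_ord (leqnSn L) i) (x + j%:R).
Proof.
rewrite /inv_rec_poly hornerD hornerN horner_prod horner_sum.
congr (_ - _); first by apply: eq_bigr => j _; rewrite !hornerE.
apply: eq_bigr => i _; rewrite hornerZ horner_prod.
by congr (_ * _); apply: eq_bigr => j _; rewrite !hornerE.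
Qed.

Lemma size_inv_rec_poly : (size inv_rec_poly <= L.+1)%N.
Proof.
rewrite /inv_rec_poly; apply: leq_trans (size_polyD _ _) _.
rewrite size_polyN geq_max size_prod_XaddC cardT size_enum_ord leqnn /=.
apply: leq_trans (size_sum _ _ _) _; apply/bigmax_leqP => i _.
apply: leq_trans (size_scale_leq _ _) _; rewrite size_prod_XaddC.
by rewrite cardC1 card_ord.
Qed.

Lemma inv_rec_poly_neq0 : (L < M)%N -> inv_rec_poly != 0.
Proof.
move=> L_lt_M; apply: contraTneq (_ : inv_rec_poly.[- L%:R] != 0) => [->|].
  by rewrite horner0 eqxx.
rewrite horner_inv_rec_poly [\sum_(i < L) _]big1 ?subr0 => [|i _]; last first.
  rewrite (bigD1 ord_max) /=; last by rewrite -val_eqE /= neq_ltn ltn_ord orbT.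
  by rewrite addNr mul0r mulr0.
apply/prodf_neq0 => j _; have j_lt_L := ltn_ord j.
rewrite addrC -opprB -natrB ?oppr_eq0 ?nat_neq0 //; [lia | exact: ltnW].
Qed.

Lemma root_inv_rec_poly u : (0 < u)%N -> (u + L < M)%N -> root inv_rec_poly u%:R.
Proof.
move=> u_gt0 uL_lt_M; pose x j := ((u + j)%:R : F).
have x_neq0 j : (j <= L)%N -> x j != 0 by move=> j_le_L; apply: nat_neq0; lia.
rewrite /root horner_inv_rec_poly.
under eq_bigr do rewrite -natrD -/(x _).
under [X in _ - X]eq_bigr => i _.
  under eq_bigr do rewrite -natrD -/(x _).
  rewrite (prod_ord_neq (x_neq0 i (ltnW (ltn_ord i)))).
over.
have -> : \prod_(j < L) x j = (\prod_(j < L.+1) x j) / x L.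
  by rewrite big_ord_recr /= mulfK ?x_neq0.
rewrite [x L]/x rec_inv // mulr_sumr subr_eq0; apply/eqP.
by apply: eq_bigr => i _ /=; rewrite mulrCA.
Qed.

Lemma natr_inj_lt a b : (a < M)%N -> (b < M)%N -> a%:R = b%:R :> F -> a = b.
Proof.
wlog a_le_b : a b / (a <= b)%N => [wlog_ab|].
  by case: (leqP a b) => [|/ltnW] ? ? ? ?; [|apply/esym]; apply: wlog_ab.
move=> _ b_lt_M ab; apply/eqP; rewrite eqn_leq a_le_b leqNgt; apply/negP => a_lt_b.
have ba_neq0 : (b - a)%:R != 0 :> F by apply: nat_neq0; lia.
by move: ba_neq0; rewrite natrB ?ab ?subrr ?eqxx // ltnW.
Qed.

Lemma inv_rec_length_bound : (M.-1 <= 2 * L)%N.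
Proof.
have [L_lt_M|] := ltnP L M; last lia.
pose rs := [seq (u%:R : F) | u <- iota 1 (M - L - 1)].
have rs_roots : all (root inv_rec_poly) rs.
  apply/allP => y /mapP[u]; rewrite mem_iota => u_bd ->.
  by apply: root_inv_rec_poly; lia.
have rs_uniq : uniq rs.
  rewrite map_inj_in_uniq ?iota_uniq // => a b; rewrite !mem_iota => a_bd b_bd.
  by apply: natr_inj_lt; lia.
have := max_poly_roots (inv_rec_poly_neq0 L_lt_M) rs_roots rs_uniq.
rewrite size_map size_iota => roots_le; have := leq_trans roots_le size_inv_rec_poly.
lia.
Qed.

End InverseRecurrence.

Lemma fermat_quotient_lin_rec_bound p N L : prime p ->
  has_lin_rec (fun u => ((fermat_quotient p u)%:R : 'F_p)) N L ->
  ((minn p (N - p)).-1 <= 2 * L)%N.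
Proof.
move=> pr_p [c rec]; have M_le_p := geq_minl p (N - p).
have M_le_Np := geq_minr p (N - p).
apply: (@inv_rec_length_bound _ L _ c) => [k k_bd|u u_gt0 uL_lt].
  by apply: Fp_nat_neq0 => //; lia.
have uLp_lt_N : (u + L + p < N)%N by lia.
have := lin_rec_sub_shift (s := fun u => ((fermat_quotient p u)%:R : 'F_p)) rec uLp_lt_N.
rewrite fermat_quotient_shift_sub //; last lia.
rewrite (eq_bigr (fun i : 'I_L => - (c i / (u + i)%:R))) => [|i _].
  by rewrite sumrN => /oppr_inj.
by rewrite fermat_quotient_shift_sub ?mulrN //; have := ltn_ord i; lia.
Qed.

Local Close Scope ring_scope.

Theorem theorem13 (p N : nat) :
  prime p -> (1 <= N)%N -> (N < p ^ 2)%N ->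
  (Num.min (p%:Z - 1) (N%:Z - p%:Z - 1) <= 2 * (Lp p N)%:Z)%R.
Proof.
move=> pr_p _ _; rewrite /Lp /linear_complexity.
case: ex_minnP => L /boolp.asboolP /(fermat_quotient_lin_rec_bound pr_p) M_le _.
rewrite ge_min; apply/orP.
by case: (leqP p (N - p)) => ?; [left | right]; lia.
Qed.
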